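(* Let $(\mathcal X_n)_n$ be a sequence of m2m spaces $\mathcal X_n=(X_n,r_n,\nu_n)$ converging with respect to $d_{2GP}$ to an m2m space $\mathcal X=(X,r,\nu)$. Then there are a complete separable metric space $(Z,r_Z)$ and isometric embeddings $\iota:X\to Z$, $\iota_n:X_n\to Z$ ($n\in\mathbb N$) such that $d_P^{\mathcal M_f(Z)}(\iota_{n**}\nu_n,\iota_{**}\nu)\to0$.
   Context: For a Polish space $X$, $\mathcal M_f(X)$ is the set of finite Borel measures; $M_\nu(A)=\int\mu(A)\,d\nu(\mu)$; for measurable $g$, $g_*\mu=\mu\circ g^{-1}$, $g_{**}\nu=\nu\circ(g_* )^{-1}$. An m2m space is $(X,r,\nu)$, $X\subset\mathbb R^{\mathbb N}$ non-empty, $(X,r)$ complete separable metric, $\nu\in\mathcal M_f(\mathcal M_f(X))$; equivalence via measurable maps isometric on $\operatorname{supp}M_\nu$ with $\lambda=f_{**}\nu$. Prokhorov distance for finite measures on a metric space $(S,\rho)$: $d_P^S(\mu,\eta)=\inf\{\varepsilon>0:\mu(A)\le\eta(A^\varepsilon)+\varepsilon,\eta(A)\le\mu(A^\varepsilon)+\varepsilon\ \forall A\text{ closed}\}$; $d_P^{\mathcal M_f(Z)}$ is the Prokhorov metric on finite measures on $(\mathcal M_f(Z),d_P^Z)$. $d_{2GP}((X,r,\nu),(Y,d,\lambda))=\inf d_P^{\mathcal M_f(Z)}(\iota_{X**}\nu,\iota_{Y**}\lambda)$ over complete separable metric spaces $Z$ and isometric embeddings $\iota_X:X\to Z,\iota_Y:Y\to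 Z$. *)

From HB Require Import structures.
From mathcomp Require Import all_boot all_order all_algebra.
From mathcomp Require Import all_classical all_reals.
From mathcomp Require Import topology normedtype sequences measure.
Set Implicit Arguments. Unset Strict Implicit. Unset Printing Implicit Defensive.
Import Order.TTheory GRing.Theory Num.Theory.
Import numFieldNormedType.Exports.
Local Open Scope classical_set_scope.
Local Open Scope ring_scope.

Section M2M.
Variable R : realType.

Definition is_metric {T : Type} (d : T -> T -> R) :=
  [/\ forall x y, 0 <= d x y, forall x y, d x y = 0 <-> x = y,
      forall x y, d x y = d y x & forall x y z, d x z <= d x y + d y z].

Definition mopen {T : Type} (d : T -> T -> R) (U : set T) :=
  forall x, U x -> exists2 e : R, 0 < e & forall y, d x y < e -> U y.
Definition mclosed {T : Type} (d : T -> T -> R) (A : set T) := mopen d (~` A).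

Definition borel {T : Type} (d : T -> T -> R) : set (set T) :=
  <<s [set U | mopen d U] >>.

Definition cauchy_seq {T : Type} (d : T -> T -> R) (u : nat -> T) :=
  forall e : R, 0 < e -> exists N, forall m n, (N <= m)%N -> (N <= n)%N -> d (u m) (u n) < e.
Definition mconverges {T : Type} (d : T -> T -> R) (u : nat -> T) (x : T) :=
  forall e : R, 0 < e -> exists N, forall n, (N <= n)%N -> d (u n) x < e.
Definition mcomplete {T : Type} (d : T -> T -> R) :=
  forall u, cauchy_seq d u -> exists x, mconverges d u x.
Definition mseparable {T : Type} (d : T -> T -> R) :=
  exists D : set T, countable D /\
    forall x (e : R), 0 < e -> exists2 y, D y & d x y < e.

Definition csm {T : Type} (d : T -> T -> R) := [/\ is_metric d, mcomplete d & mseparable d].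

Definition isometric {T U : Type} (dT : T -> T -> R) (dU : U -> U -> R) (f : T -> U) :=
  forall x y, dU (f x) (f y) = dT x y.

Definition is_finmeas {T : Type} (d : T -> T -> R) (mu : set T -> R) :=
  [/\ mu set0 = 0,
      forall A, borel d A -> 0 <= mu A &
      forall F : nat -> set T, (forall n, borel d (F n)) -> trivIset setT F ->
        (fun n => \sum_(i < n) mu (F i)) @ \oo --> mu (\bigcup_n F n)].

Definition Mf {T : Type} (d : T -> T -> R) := {mu : set T -> R | is_finmeas d mu}.

Lemma is_finmeas0 {T : Type} (d : T -> T -> R) : is_finmeas d (fun _ => 0).
Proof.
split => //= F _ _.
have -> : (fun n => \sum_(i < n) (0:R)) = (fun _ => 0).
  by apply: funext => n; rewrite big1.
exact: cvg_cst.
Qed.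

Definition zeroMf {T : Type} (d : T -> T -> R) : Mf d := exist _ _ (is_finmeas0 d).

Definition enlarge {T : Type} (d : T -> T -> R) (A : set T) (e : R) : set T :=
  [set x | exists2 a, A a & d x a < e].

Definition dP {T : Type} (d : T -> T -> R) (mu eta : Mf d) : R :=
  inf [set e : R | 0 < e /\ forall A, mclosed d A ->
        sval mu A <= sval eta (enlarge d A e) + e /\
        sval eta A <= sval mu (enlarge d A e) + e].

(** image measure g_{*} mu = mu o g^-1 (it is a finite Borel measure whenever g is
    Borel measurable, e.g. an isometric embedding; the default branch is never
    used in that case) *)
Definition pushMf {T U : Type} (dT : T -> T -> R) (dU : U -> U -> R) (g : T -> U)
  (mu : Mf dT) : Mf dU :=
  match pselect (is_finmeas dU (fun A => sval mu (g @^-1` A))) with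
  | left h => exist _ _ h
  | right _ => zeroMf dU
  end.

Definition push2 {T U : Type} (dT : T -> T -> R) (dU : U -> U -> R) (g : T -> U)
  (nu : Mf (@dP T dT)) : Mf (@dP U dU) :=
  @pushMf _ _ (@dP T dT) (@dP U dU) (@pushMf T U dT dU g) nu.

(** m2m spaces: X a nonempty subset of R^N, r a complete separable metric on X,
    nu a finite measure on M_f(X) (with the Prokhorov metric) *)
Record m2m := M2m {
  m2m_set : set (nat -> R);
  m2m_ne : m2m_set !=set0;
  m2m_r : {x : nat -> R | m2m_set x} -> {x : nat -> R | m2m_set x} -> R;
  m2m_rP : csm m2m_r;
  m2m_nu : Mf (@dP _ m2m_r) }.

Arguments m2m_r : clear implicits.
Arguments m2m_nu : clear implicits.
Arguments m2m_set : clear implicits.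

Definition pts (X : m2m) := {x : nat -> R | m2m_set X x}.

Definition d2GP (X Y : m2m) : R :=
  inf [set e : R | exists (Z : Type) (dZ : Z -> Z -> R)
         (iX : pts X -> Z) (iY : pts Y -> Z),
         [/\ csm dZ, isometric (m2m_r X) dZ iX, isometric (m2m_r Y) dZ iY &
             e = @dP _ (@dP _ dZ) (@push2 _ _ (m2m_r X) dZ iX (m2m_nu X))
                            (@push2 _ _ (m2m_r Y) dZ iY (m2m_nu Y))]].

End M2M.

Arguments dP {R T} d mu eta.
Arguments pushMf {R T U} dT dU g mu.
Arguments push2 {R T U} dT dU g nu.
Arguments zeroMf {R T} d.
Arguments m2m_r {R} m.
Arguments m2m_nu {R} m.
Arguments m2m_set {R} m.

From HB Require Import structures.
From mathcomp Require Import all_boot all_order all_algebra.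
From mathcomp Require Import all_classical all_reals.
From mathcomp Require Import topology normedtype sequences measure.
From mathcomp Require Import lra.
Import Order.TTheory GRing.Theory Num.Theory.
Import numFieldNormedType.Exports.
Local Open Scope classical_set_scope.
Local Open Scope ring_scope.

(* Choose, for every n, a complete separable space Z_n containing isometric copies
   of X_n and X in which the Prokhorov distance of the pushed-forward measures is
   below d2GP(X_n, X) + 1/(n+1).  Glue all Z_n along their copies of X: on the
   disjoint union, z in Z_n and w in Z_m (n <> m) are at distance
   inf_y d_n(z, y) + d_m(y, w), y ranging over X, and identifying points at distance
   zero yields a complete separable metric space Z in which every Z_n embeds
   isometrically and all copies of X coincide.  Pushing forward along a 1-Lipschitz
   map does not increase Prokhorov distances, at either level, so in Z the distance
   between the images of nu_n and nu is still below d2GP(X_n, X) + 1/(n+1). *)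

Lemma lb_le_add_inf {R : realType} (S : set R) a c : S !=set0 ->
  (forall s, S s -> c <= a + s) -> c <= a + inf S.
Proof.
move=> S0 h; suff : c - a <= inf S by lra.
by apply: lb_le_inf => // s Ss; have := h s Ss; lra.
Qed.

Lemma lb_le_inf_add_inf {R : realType} (S1 S2 : set R) c : S1 !=set0 -> S2 !=set0 ->
  (forall a b, S1 a -> S2 b -> c <= a + b) -> c <= inf S1 + inf S2.
Proof.
move=> S10 S20 h; rewrite addrC; apply: lb_le_add_inf S10 _ => a S1a.
by rewrite addrC; apply: lb_le_add_inf S20 _ => b S2b; apply: h.
Qed.

Lemma inv_succ_lt {R : realType} (e : R) : 0 < e ->
  exists N, forall k, (N <= k)%N -> k.+1%:R^-1 < e.
Proof.
move=> e0; have [N Ne] := ltr_add_invr e0; exists N => k kN.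
by apply: le_lt_trans Ne; rewrite add0r lef_pV2 ?posrE // ler_nat ltnS.
Qed.

Lemma sval_inj {A : Type} {P : A -> Prop} (u v : {x | P x}) : sval u = sval v -> u = v.
Proof. by apply: eq_sig_hprop => x p q; apply: Prop_irrelevance. Qed.

Definition pseudometric {R : realType} {T : Type} (d : T -> T -> R) :=
  (forall x y, d x y = d y x) /\ (forall x y z, d x z <= d x y + d y z).

Lemma csm_pseudometric {R : realType} {T : Type} (d : T -> T -> R) :
  csm d -> pseudometric d.
Proof. by case=> -[]. Qed.

Section Borel.
Context {R : realType} {T : Type} {d : T -> T -> R}.

Lemma borel_mopen {U} : mopen d U -> borel d U.
Proof. exact: sub_sigma_algebra. Qed.

Lemma borel_mclosed {A} : mclosed d A -> borel d A.
Proof.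
by move=> cA; rewrite -[A]setCK -setTD; apply: sigma_algebraCD; apply: borel_mopen.
Qed.

Lemma borelT : borel d setT.
Proof. by apply: borel_mopen => x _; exists 1. Qed.

Lemma borelD {A B} : borel d A -> borel d B -> borel d (A `\` B).
Proof.
move=> bA bB; have -> : A `\` B = setT `\` \bigcup_i bigcup2 (~` A) B i.
  by rewrite bigcup2E setTD setCU setCK.
apply: sigma_algebraCD; apply: sigma_algebra_bigcup => -[|[|i]] //=.
- by rewrite -setTD; apply: sigma_algebraCD.
- exact: sigma_algebra0.
Qed.

Lemma le_finmeas mu : is_finmeas d mu ->
  forall A B, borel d A -> borel d B -> A `<=` B -> mu A <= mu B.
Proof.
case=> mu0 mu_ge0 mu_sigma A B bA bB AB.
have bF n : borel d (bigcup2 A (B `\` A) n).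
  by case: n => [|[|n]] /=; [done | exact: borelD | exact: sigma_algebra0].
have tF : trivIset setT (bigcup2 A (B `\` A)).
  move=> i j _ _ [x []].
  case: i => [|[|i]]; case: j => [|[|j]] //=.
  - by move=> Ax [_ /(_ Ax)].
  - by move=> [_ /[apply]].
have := mu_sigma _ bF tF; rewrite bigcup2E setDUK // => mu_sum.
have mu_sum2 : (fun n => \sum_(i < n) mu (bigcup2 A (B `\` A) i)) @ \oo -->
    mu A + mu (B `\` A).
  apply: cvg_near_cst; exists 2%N => // n /= n2.
  case: n n2 => [|[|k]] // _.
  by rewrite big_ord_recl big_ord_recl big1 /= ?addr0.
have := mu_ge0 _ (borelD bB bA).
by rewrite (cvg_unique (@Rhausdorff R) mu_sum mu_sum2); lra.
Qed.

Lemma Mf_ge0 (mu : Mf d) {A} : borel d A -> 0 <= sval mu A.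
Proof. by case: (svalP mu) => _ + _; apply. Qed.

Lemma le_Mf (mu : Mf d) {A B} : borel d A -> borel d B -> A `<=` B -> sval mu A <= sval mu B.
Proof. exact: le_finmeas (svalP mu) A B. Qed.

End Borel.

Arguments borelT {R T} d.

Section Prokhorov.
Context {R : realType} {T : Type} (d : T -> T -> R).

Definition prokhorov_set (mu eta : Mf d) := [set e : R | 0 < e /\ forall A, mclosed d A ->
  sval mu A <= sval eta (enlarge d A e) + e /\ sval eta A <= sval mu (enlarge d A e) + e].

Lemma dPE mu eta : dP d mu eta = inf (prokhorov_set mu eta).
Proof. by []. Qed.

Lemma dP_le {mu eta e} : prokhorov_set mu eta e -> dP d mu eta <= e.
Proof. by move=> he; apply: ge_inf he; exists 0 => y [/ltW]. Qed.

Lemma dP_ge0 mu eta : 0 <= dP d mu eta.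
Proof.
rewrite dPE; have [[e he]|S0] := pselect (prokhorov_set mu eta !=set0).
  by apply: lb_le_inf; [exists e | move=> y [/ltW]].
suff -> : prokhorov_set mu eta = set0 by rewrite inf0.
by apply/seteqP; split => // e he; apply: S0; exists e.
Qed.

Lemma dP_sym mu eta : dP d mu eta = dP d eta mu.
Proof.
rewrite !dPE; congr inf; apply/seteqP; split => e [e0 he];
  by split => // A /he [].
Qed.

Hypothesis d_pm : pseudometric d.

Lemma mopen_enlarge A e : mopen d (enlarge d A e).
Proof.
case: d_pm => d_sym d_tri x [a Aa xa]; exists (e - d x a); first by rewrite subr_gt0.
by move=> y xy; exists a => //; have := d_tri y x a; rewrite (d_sym y x); lra.
Qed.

Lemma borel_enlarge A e : borel d (enlarge d A e).
Proof. exact: borel_mopen (mopen_enlarge A e). Qed.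

Lemma prokhorov_set_neq0 mu eta : prokhorov_set mu eta !=set0.
Proof.
pose e := 1 + sval mu setT + sval eta setT.
have := Mf_ge0 mu (borelT d); have := Mf_ge0 eta (borelT d) => eta0 mu0.
exists e; split => [|A cA]; first by rewrite /e; lra.
have bA := borel_mclosed cA.
have := le_Mf mu bA (borelT d) (@subsetT _ A); have := Mf_ge0 mu (borel_enlarge A e).
have := le_Mf eta bA (borelT d) (@subsetT _ A); have := Mf_ge0 eta (borel_enlarge A e).
by rewrite /e; split; lra.
Qed.

(* The hypotheses only apply to closed sets, so [A^e1] is replaced by the closed
   set [C], which contains [A^e1] and satisfies [C^e2 `<=` A^(e1 + e2)]. *)
Lemma prokhorov_bound_trans {mu eta kappa : Mf d} {e1 e2} : 0 < e1 -> 0 < e2 ->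
  (forall A, mclosed d A -> sval mu A <= sval eta (enlarge d A e1) + e1) ->
  (forall A, mclosed d A -> sval eta A <= sval kappa (enlarge d A e2) + e2) ->
  forall A, mclosed d A ->
    sval mu A <= sval kappa (enlarge d A (e1 + e2)) + (e1 + e2).
Proof.
case: d_pm => d_sym d_tri e10 e20 mu_eta eta_kappa A cA.
pose C := [set x | forall de, 0 < de -> enlarge d A (e1 + de) x].
have cC : mclosed d C.
  move=> x nCx.
  have [de de0 far] : exists2 de, 0 < de & forall a, A a -> e1 + de <= d x a.
    apply: contrapT => near; apply: nCx => de de0; apply: contrapT => nxA.
    apply: near; exists de => // a Aa; rewrite leNgt; apply/negP => lt.
    by apply: nxA; exists a.
  exists (de / 2) => [|y xy Cy]; first by rewrite divr_gt0.
  have [a Aa ya] := Cy (de / 2) (ltac:(lra)).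
  by have := far a Aa; have := d_tri x y a; lra.
have AC : enlarge d A e1 `<=` C.
  by move=> x [a Aa xa] de de0; exists a => //; lra.
have CA : enlarge d C e2 `<=` enlarge d A (e1 + e2).
  move=> x [c Cc xc]; have [a Aa ca] := Cc (e2 - d x c) (ltac:(lra)).
  by exists a => //; have := d_tri x c a; lra.
have := le_Mf eta (borel_enlarge A e1) (borel_mclosed cC) AC.
have := le_Mf kappa (borel_enlarge C e2) (borel_enlarge A (e1 + e2)) CA.
by have := mu_eta A cA; have := eta_kappa C cC; lra.
Qed.

Lemma dP_triangle mu eta kappa : dP d mu kappa <= dP d mu eta + dP d eta kappa.
Proof.
rewrite !dPE; apply: lb_le_inf_add_inf; try exact: prokhorov_set_neq0.
move=> a b [a0 ha] [b0 hb]; apply: dP_le; split => [|A cA]; first lra.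
split; first by apply: (prokhorov_bound_trans a0 b0) => // B cB;
  [exact: (ha B cB).1 | exact: (hb B cB).1].
by rewrite (addrC a b); apply: (prokhorov_bound_trans b0 a0) => // B cB;
  [exact: (hb B cB).2 | exact: (ha B cB).2].
Qed.

Lemma dP_pseudometric : pseudometric (dP d).
Proof. by split; [exact: dP_sym | exact: dP_triangle]. Qed.

End Prokhorov.

Section Pushforward.
Context {R : realType} {T U : Type} {dT : T -> T -> R} {dU : U -> U -> R}.

Definition nonexpansive (f : T -> U) := forall x y, dU (f x) (f y) <= dT x y.

Definition borel_measurable (f : T -> U) :=
  forall A, borel dU A -> borel dT (f @^-1` A).

Lemma isometric_nonexpansive {f} : isometric dT dU f -> nonexpansive f.
Proof. by move=> f_iso x y; rewrite f_iso. Qed.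

Lemma nonexpansive_mopen {f A} : nonexpansive f -> mopen dU A -> mopen dT (f @^-1` A).
Proof.
move=> f_ne oA x Afx; have [e e0 ballA] := oA _ Afx; exists e => // y xy.
by apply: ballA; have := f_ne x y; lra.
Qed.

Lemma nonexpansive_mclosed {f A} : nonexpansive f -> mclosed dU A -> mclosed dT (f @^-1` A).
Proof. exact: nonexpansive_mopen. Qed.

Lemma nonexpansive_measurable {f} : nonexpansive f -> borel_measurable f.
Proof.
move=> f_ne A bA; suff : image_set_system setT f (borel dT) A.
  by rewrite /image_set_system /= setTI.
apply: (smallest_sub (sigma_algebra_image f (smallest_sigma_algebra _ _))) bA.
move=> V oV; rewrite /image_set_system /= setTI.
exact: borel_mopen (nonexpansive_mopen f_ne oV).
Qed.

Lemma is_finmeas_preimage {f mu} : borel_measurable f -> is_finmeas dT mu ->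
  is_finmeas dU (fun A => mu (f @^-1` A)).
Proof.
move=> f_mes [mu0 mu_ge0 mu_sigma]; split => [|A /f_mes/mu_ge0 //|F bF tF].
  by rewrite preimage_set0.
rewrite preimage_bigcup; apply: mu_sigma => [n|i j _ _ [x [Fi Fj]]]; first exact: f_mes.
by apply: tF => //; exists (f x).
Qed.

Lemma pushMfE {f} (mu : Mf dT) : borel_measurable f ->
  sval (pushMf dT dU f mu) = fun A => sval mu (f @^-1` A).
Proof.
move=> f_mes; rewrite /pushMf; case: pselect => // -[].
exact: is_finmeas_preimage f_mes (svalP mu).
Qed.

End Pushforward.

Arguments nonexpansive {R T U} dT dU f.
Arguments borel_measurable {R T U} dT dU f.

Section PushforwardComp.
Context {R : realType} {T U V : Type}.
Variables (dT : T -> T -> R) (dU : U -> U -> R) (dV : V -> V -> R).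
Hypotheses (dT_pm : pseudometric dT) (dU_pm : pseudometric dU) (dV_pm : pseudometric dV).

Lemma nonexpansive_pushMf (f : T -> U) :
  nonexpansive dT dU f -> nonexpansive (dP dT) (dP dU) (pushMf dT dU f).
Proof.
move=> f_ne mu eta; rewrite (dPE dT).
apply: lb_le_inf; first exact: prokhorov_set_neq0.
move=> e [e0 he]; apply: dP_le; split => // A cA.
have f_mes := nonexpansive_measurable f_ne.
have [mu_eta eta_mu] := he _ (nonexpansive_mclosed f_ne cA).
have sub : enlarge dT (f @^-1` A) e `<=` f @^-1` (enlarge dU A e).
  by move=> x [a Aa xa]; exists (f a) => //; have := f_ne x a; lra.
have bl := borel_enlarge _ dT_pm (f @^-1` A) e.
have br := f_mes _ (borel_enlarge _ dU_pm A e).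
have := le_Mf eta bl br sub; have := le_Mf mu bl br sub.
by rewrite !(pushMfE _ f_mes); lra.
Qed.

Lemma isometric_comp (f : T -> U) (g : U -> V) :
  isometric dT dU f -> isometric dU dV g -> isometric dT dV (g \o f).
Proof. by move=> f_iso g_iso x y; rewrite /= g_iso f_iso. Qed.

Lemma pushMf_comp (f : T -> U) (g : U -> V) (mu : Mf dT) :
  borel_measurable dT dU f -> borel_measurable dU dV g ->
  pushMf dT dV (g \o f) mu = pushMf dU dV g (pushMf dT dU f mu).
Proof.
move=> f_mes g_mes; have gf_mes : borel_measurable dT dV (g \o f).
  by move=> A /g_mes /f_mes.
by apply: sval_inj; rewrite !pushMfE.
Qed.

End PushforwardComp.

Lemma push2_comp {R : realType} {T U V : Type}
    {dT : T -> T -> R} {dU : U -> U -> R} {dV : V -> V -> R} {f : T -> U} {g : U -> V} nu :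
  pseudometric dT -> pseudometric dU -> pseudometric dV ->
  nonexpansive dT dU f -> nonexpansive dU dV g ->
  push2 dT dV (g \o f) nu =
    pushMf (dP dU) (dP dV) (pushMf dU dV g) (push2 dT dU f nu).
Proof.
move=> dT_pm dU_pm dV_pm f_ne g_ne; have f_mes := nonexpansive_measurable f_ne.
have g_mes := nonexpansive_measurable g_ne; rewrite /push2.
have -> : pushMf dT dV (g \o f) = pushMf dU dV g \o pushMf dT dU f.
  by apply: funext => mu; exact: pushMf_comp.
by apply: pushMf_comp; apply: nonexpansive_measurable; exact: nonexpansive_pushMf.
Qed.

Lemma dP_push2_comp_le {R : realType} {T1 T2 W V : Type}
    {d1 : T1 -> T1 -> R} {d2 : T2 -> T2 -> R} {dW : W -> W -> R} {dV : V -> V -> R}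
    {a : T1 -> W} {b : T2 -> W} {e : W -> V} {nu1 nu2} :
  pseudometric d1 -> pseudometric d2 -> pseudometric dW -> pseudometric dV ->
  nonexpansive d1 dW a -> nonexpansive d2 dW b -> nonexpansive dW dV e ->
  dP (dP dV) (push2 d1 dV (e \o a) nu1) (push2 d2 dV (e \o b) nu2) <=
  dP (dP dW) (push2 d1 dW a nu1) (push2 d2 dW b nu2).
Proof.
move=> d1_pm d2_pm dW_pm dV_pm a_ne b_ne e_ne.
rewrite (push2_comp nu1 d1_pm dW_pm dV_pm a_ne e_ne).
rewrite (push2_comp nu2 d2_pm dW_pm dV_pm b_ne e_ne).
by apply: nonexpansive_pushMf; try exact: dP_pseudometric; exact: nonexpansive_pushMf.
Qed.

Section Convergence.
Context {R : realType} {T : Type} {d : T -> T -> R}.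
Hypothesis d_pm : pseudometric d.

Lemma mconverges_close (u v : nat -> T) x :
  (forall e, 0 < e -> exists N, forall k, (N <= k)%N -> d (u k) (v k) < e) ->
  mconverges d v x -> mconverges d u x.
Proof.
move=> uv vx e e0; have [N1 uvN1] := uv (e / 2) (ltac:(lra)).
have [N2 vxN2] := vx (e / 2) (ltac:(lra)); exists (maxn N1 N2) => k.
rewrite geq_max => /andP[kN1 kN2]; have := d_pm.2 (u k) (v k) x.
by have := uvN1 k kN1; have := vxN2 k kN2; lra.
Qed.

Lemma cauchy_subseq_mconverges (u : nat -> T) (f : nat -> nat) x :
  cauchy_seq d u -> (forall k, (k <= f k)%N) -> mconverges d (u \o f) x ->
  mconverges d u x.
Proof.
move=> u_cauchy f_ge; apply: mconverges_close => e e0.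
have [N uN] := u_cauchy e e0; exists N => k kN; apply: uN => //.
exact: leq_trans kN (f_ge k).
Qed.

End Convergence.

Section MetricQuotient.
Context {R : realType} {S : Type} (rho : S -> S -> R).
Hypotheses (rho_ge0 : forall p q, 0 <= rho p q) (rho_refl : forall p, rho p p = 0).
Hypothesis rho_pm : pseudometric rho.

Definition mquot := {C : set S | exists p, C = [set q | rho p q = 0]}.
Definition mquot_pi (p : S) : mquot := exist _ [set q | rho p q = 0] (ex_intro _ p erefl).
Definition mquot_repr (C : mquot) : S := sval (cid (svalP C)).
Definition mquot_dist (C D : mquot) : R := rho (mquot_repr C) (mquot_repr D).

Lemma rho_congr {p p'} q : rho p p' = 0 -> rho p q = rho p' q.
Proof.
case: rho_pm => rho_sym rho_tri pp'; have := rho_tri p p' q.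
by have := rho_tri p' p q; rewrite (rho_sym p' p) pp'; lra.
Qed.

Lemma mquot_pi_eq p q : rho p q = 0 -> mquot_pi p = mquot_pi q.
Proof.
by move=> pq; apply: sval_inj; apply/seteqP; split => r; rewrite /= (rho_congr r pq).
Qed.

Lemma mquot_reprK C : mquot_pi (mquot_repr C) = C.
Proof. by apply: sval_inj; rewrite /mquot_repr; case: cid. Qed.

Lemma mquot_repr_pi p : rho (mquot_repr (mquot_pi p)) p = 0.
Proof.
have E := congr1 sval (mquot_reprK (mquot_pi p)).
by move: (rho_refl p); rewrite -[rho p p = 0]/(sval (mquot_pi p) p) -E.
Qed.

Lemma mquot_dist_pi p q : mquot_dist (mquot_pi p) (mquot_pi q) = rho p q.
Proof.
case: rho_pm => rho_sym _; rewrite /mquot_dist (rho_congr _ (mquot_repr_pi p)).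
by rewrite rho_sym (rho_congr _ (mquot_repr_pi q)) rho_sym.
Qed.

Lemma mquot_distE C p : mquot_dist C (mquot_pi p) = rho (mquot_repr C) p.
Proof. by rewrite -{1}(mquot_reprK C) mquot_dist_pi. Qed.

Lemma mquot_csm : mcomplete rho -> mseparable rho -> csm mquot_dist.
Proof.
case: rho_pm => rho_sym rho_tri rho_complete [D [D_count D_dense]]; split.
- split => [C C'|C C'|C C'|C C' C''].
  + exact: rho_ge0.
  + split => [CC'|-> ]; last exact: rho_refl.
    by rewrite -(mquot_reprK C) -(mquot_reprK C'); apply: mquot_pi_eq.
  + exact: rho_sym.
  + exact: rho_tri.
- move=> u u_cauchy; have [p up] := rho_complete (mquot_repr \o u) u_cauchy.
  by exists (mquot_pi p) => e /up [N uN]; exists N => n nN; rewrite mquot_distE; apply: uN.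
- exists (mquot_pi @` D); split; first exact: card_le_trans (card_image_le _ _) D_count.
  move=> C e /(D_dense (mquot_repr C)) [p Dp Cp].
  by exists (mquot_pi p); [exists p | rewrite mquot_distE].
Qed.

End MetricQuotient.

Section Gluing.
Context {R : realType} {Y : Type} (dY : Y -> Y -> R) (y0 : Y).
Hypothesis dY_complete : mcomplete dY.
Variables (Z : nat -> Type) (dZ : forall n, Z n -> Z n -> R) (j : forall n, Y -> Z n).
Hypotheses (dZ_csm : forall n, csm (dZ n)) (j_iso : forall n, isometric dY (dZ n) (j n)).

Let dZ_ge0 {n} (x y : Z n) : 0 <= dZ n x y. Proof. by case: (dZ_csm n) => -[]. Qed.
Let dZ_sym {n} (x y : Z n) : dZ n x y = dZ n y x. Proof. by case: (dZ_csm n) => -[]. Qed.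
Let dZ_tri {n} (x y z : Z n) : dZ n x z <= dZ n x y + dZ n y z.
Proof. by case: (dZ_csm n) => -[]. Qed.
Let dZ_refl {n} (x : Z n) : dZ n x x = 0.
Proof. by case: (dZ_csm n) => -[_ dZ0 _ _] _ _; apply/dZ0. Qed.

Definition glue_gap {n m} (z : Z n) (w : Z m) (y : Y) : R := dZ n z (j n y) + dZ m (j m y) w.

Definition glue_cross {n m} (z : Z n) (w : Z m) : R := inf (range (glue_gap z w)).

Section Cross.
Context {n m : nat} (z : Z n) (w : Z m).

Lemma glue_gap_ge0 y : 0 <= glue_gap z w y.
Proof. exact: addr_ge0 (dZ_ge0 _ _) (dZ_ge0 _ _). Qed.

Lemma has_inf_glue_gap : has_inf (range (glue_gap z w)).
Proof.
by split; [exists (glue_gap z w y0), y0 | exists 0 => _ [y _ <-]; apply: glue_gap_ge0].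
Qed.

Lemma glue_cross_le y : glue_cross z w <= glue_gap z w y.
Proof. by apply: ge_inf; [exact: has_inf_glue_gap.2 | exists y]. Qed.

Lemma glue_cross_ge c : (forall y, c <= glue_gap z w y) -> c <= glue_cross z w.
Proof.
move=> c_lb; apply: lb_le_inf => [|_ [y _ <-]]; first exact: has_inf_glue_gap.1.
exact: c_lb.
Qed.

Lemma glue_cross_ge0 : 0 <= glue_cross z w.
Proof. exact/glue_cross_ge/glue_gap_ge0. Qed.

Lemma glue_cross_approx e : 0 < e -> exists y, glue_gap z w y < glue_cross z w + e.
Proof.
move=> e0; have [_ [y _ <-] ?] := inf_adherent e0 has_inf_glue_gap.
by exists y.
Qed.

Lemma glue_crossC : glue_cross z w = glue_cross w z.
Proof.
rewrite /glue_cross (_ : glue_gap z w = glue_gap w z) //; apply: funext => y.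
by rewrite /glue_gap addrC dZ_sym (dZ_sym (j n y)).
Qed.

End Cross.

Definition glue_dist (p q : {n & Z n}) : R :=
  match p, q with existT n z, existT m w =>
    match pselect (m = n) with
    | left e => dZ n z (eq_rect m Z w n e)
    | right _ => glue_cross z w
    end end.

Arguments glue_dist : simpl never.

Lemma glue_dist_same {n} (z w : Z n) : glue_dist (existT _ n z) (existT _ n w) = dZ n z w.
Proof. by rewrite /glue_dist; case: pselect => [e|//]; rewrite (eq_axiomK e). Qed.

Lemma glue_dist_diff {n m} (z : Z n) (w : Z m) : m <> n ->
  glue_dist (existT _ n z) (existT _ m w) = glue_cross z w.
Proof. by move=> mn; rewrite /glue_dist; case: pselect. Qed.

Lemma glue_dist_ge0 p q : 0 <= glue_dist p q.
Proof.
case: p q => n z [m w]; have [mn|mn] := pselect (m = n).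
  by subst m; rewrite glue_dist_same.
by rewrite glue_dist_diff // glue_cross_ge0.
Qed.

Lemma glue_dist_refl p : glue_dist p p = 0.
Proof. by case: p => n z; rewrite glue_dist_same dZ_refl. Qed.

Lemma glue_distC p q : glue_dist p q = glue_dist q p.
Proof.
case: p q => n z [m w]; have [mn|mn] := pselect (m = n).
  by subst m; rewrite !glue_dist_same dZ_sym.
by rewrite !glue_dist_diff 1?glue_crossC // => nm; apply: mn.
Qed.

Lemma glue_dist_le_path {n k} (z : Z n) (u : Z k) y y' :
  glue_dist (existT _ n z) (existT _ k u) <= dZ n z (j n y) + dY y y' + dZ k (j k y') u.
Proof.
have [kn|kn] := pselect (k = n).
  subst k; rewrite glue_dist_same -(j_iso n y y').
  by have := dZ_tri z (j n y) u; have := dZ_tri (j n y) (j n y') u; lra.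
rewrite glue_dist_diff //; have := glue_cross_le z u y; rewrite /glue_gap -(j_iso k y y').
by have := dZ_tri (j k y) (j k y') u; lra.
Qed.

Lemma glue_dist_triangle p q r : glue_dist p r <= glue_dist p q + glue_dist q r.
Proof.
case: p q r => n z [m w] [k u].
have [mn|mn] := pselect (m = n); have [km|km] := pselect (k = m).
- by subst m k; rewrite !glue_dist_same.
- subst m; rewrite glue_dist_same !glue_dist_diff //.
  apply: lb_le_add_inf => [|_ [y _ <-]]; first exact: (has_inf_glue_gap _ _).1.
  have := glue_dist_le_path z u y y; rewrite -(j_iso n y y) dZ_refl glue_dist_diff //.
  by rewrite /glue_gap; have := dZ_tri z w (j n y); lra.
- subst k; rewrite glue_dist_same !glue_dist_diff // addrC.
  apply: lb_le_add_inf => [|_ [y _ <-]]; first exact: (has_inf_glue_gap _ _).1.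
  have := glue_dist_le_path z u y y; rewrite -(j_iso m y y) dZ_refl glue_dist_diff //.
  by rewrite /glue_gap; have := dZ_tri (j m y) w u; lra.
- rewrite (glue_dist_diff z w mn) (glue_dist_diff w u km).
  apply: lb_le_inf_add_inf => [||_ _ [y _ <-] [y' _ <-]];
    try exact: (has_inf_glue_gap _ _).1.
  have := glue_dist_le_path z u y y'; rewrite /glue_gap -(j_iso m y y').
  by have := dZ_tri (j m y) w (j m y'); lra.
Qed.

Lemma glue_dist_pseudometric : pseudometric glue_dist.
Proof. by split; [exact: glue_distC | exact: glue_dist_triangle]. Qed.

Lemma glue_dist_j {n m} y (w : Z m) :
  glue_dist (existT _ n (j n y)) (existT _ m w) = dZ m (j m y) w.
Proof.
have [mn|mn] := pselect (m = n); first by subst m; rewrite glue_dist_same.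
rewrite glue_dist_diff //; apply/eqP; rewrite eq_le; apply/andP; split.
  by have := glue_cross_le (j n y) w y; rewrite /glue_gap dZ_refl add0r.
apply: glue_cross_ge => y'; rewrite /glue_gap (j_iso n y y') -(j_iso m y y').
exact: dZ_tri.
Qed.

Lemma glue_dist_jj n m y y' :
  glue_dist (existT _ n (j n y)) (existT _ m (j m y')) = dY y y'.
Proof. by rewrite glue_dist_j j_iso. Qed.

Lemma glue_cauchy_recurrent (u : nat -> {n & Z n}) n : cauchy_seq glue_dist u ->
  (forall N, exists k, (N <= k)%N /\ projT1 (u k) = n) ->
  exists p, mconverges glue_dist u p.
Proof.
move=> u_cauchy n_rec.
have /choice [f f_sub] : forall N, exists kw : nat * Z n,
    (N <= kw.1)%N /\ u kw.1 = existT _ n kw.2.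
  move=> N; have [k [Nk]] := n_rec N; case E: (u k) => [m w] /= mn; subst m.
  by exists (k, w).
pose w N := (f N).2.
have w_cauchy : cauchy_seq (dZ n) w.
  move=> e /u_cauchy [N uN]; exists N => a b aN bN; rewrite -glue_dist_same -!(f_sub _).2.
  by apply: uN; [exact: leq_trans aN (f_sub a).1 | exact: leq_trans bN (f_sub b).1].
have [_ dZn_complete _] := dZ_csm n; have [z wz] := dZn_complete w w_cauchy.
exists (existT _ n z).
apply: (cauchy_subseq_mconverges glue_dist_pseudometric u (fun N => (f N).1)) => //.
  by move=> N; exact: (f_sub N).1.
by move=> e /wz [N wN]; exists N => k kN; rewrite /= (f_sub k).2 glue_dist_same; apply: wN.
Qed.

(* Near a point [u k] whose component is left later on, the inf defining
   [glue_cross] provides a point [y k] of [Y]; these points form a Cauchy sequence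
   in [Y], whose limit is the limit of [u]. *)
Lemma glue_cauchy_switching (u : nat -> {n & Z n}) : cauchy_seq glue_dist u ->
  (forall k, exists l, (k <= l)%N /\ projT1 (u l) <> projT1 (u k)) ->
  exists p, mconverges glue_dist u p.
Proof.
move=> u_cauchy switch.
have /choice [y uy] : forall k, exists y : Y, exists l, (k <= l)%N /\
    glue_dist (u k) (existT Z 0%N (j 0%N y)) < glue_dist (u k) (u l) + k.+1%:R^-1.
  move=> k; have [l [kl]] := switch k.
  case: (u k) => [n z]; case ul: (u l) => [m w] /= mn.
  have [y zwy] := glue_cross_approx z w (k.+1%:R^-1) (ltac:(by rewrite invr_gt0)).
  exists y, l; split => //; rewrite ul glue_distC glue_dist_j (glue_dist_diff z w mn) dZ_sym.
  by apply: le_lt_trans zwy; rewrite /glue_gap lerDl dZ_ge0.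
pose v k := existT Z 0%N (j 0%N (y k)).
have uv e : 0 < e -> exists N, forall k, (N <= k)%N -> glue_dist (u k) (v k) < e.
  move=> e0; have [N1 uN1] := u_cauchy (e / 2) (ltac:(lra)).
  have [N2 invN2] := inv_succ_lt (e / 2) (ltac:(lra)).
  exists (maxn N1 N2) => k; rewrite geq_max => /andP[kN1 kN2].
  have [l [kl]] := uy k; have := uN1 k l kN1 (leq_trans kN1 kl).
  by have := invN2 k kN2; rewrite /v; move: k.+1%:R^-1 => t; lra.
have y_cauchy : cauchy_seq dY y.
  move=> e e0; have [N1 uvN1] := uv (e / 3) (ltac:(lra)).
  have [N2 uN2] := u_cauchy (e / 3) (ltac:(lra)).
  exists (maxn N1 N2) => a b; rewrite !geq_max => /andP[aN1 aN2] /andP[bN1 bN2].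
  have -> : dY (y a) (y b) = glue_dist (v a) (v b) by rewrite glue_dist_jj.
  have := glue_dist_triangle (v a) (u a) (v b).
  have := glue_dist_triangle (u a) (u b) (v b); rewrite (glue_distC (v a) (u a)).
  by have := uvN1 a aN1; have := uvN1 b bN1; have := uN2 a b aN2 bN2; lra.
have [y_lim y_cvg] := dY_complete y y_cauchy.
exists (existT _ 0%N (j 0%N y_lim)).
apply: (mconverges_close glue_dist_pseudometric u v) => // e /y_cvg [N yN].
by exists N => k kN; rewrite glue_dist_jj; apply: yN.
Qed.

Lemma glue_complete : mcomplete glue_dist.
Proof.
move=> u u_cauchy.
have [[n n_rec]|no_rec] :=
  pselect (exists n, forall N, exists k, (N <= k)%N /\ projT1 (u k) = n).
  exact: glue_cauchy_recurrent n_rec.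
apply: glue_cauchy_switching => // k; apply: contrapT => stay; apply: no_rec.
exists (projT1 (u k)) => N; exists (maxn N k); split; first exact: leq_maxl.
apply: contrapT => ne; apply: stay; exists (maxn N k); split => //; exact: leq_maxr.
Qed.

Lemma glue_separable : mseparable glue_dist.
Proof.
have sep n : exists D : set (Z n), countable D /\
    forall x e, 0 < e -> exists2 y, D y & dZ n x y < e by case: (dZ_csm n).
pose D n := sval (cid (sep n)); have D_dense n := svalP (cid (sep n)).
exists (\bigcup_(n in setT) [set existT Z n z | z in D n]); split.
  apply: bigcup_countable => [|n _]; first exact: countableP.
  exact: card_le_trans (card_image_le _ _) (D_dense n).1.
move=> [n z] e /((D_dense n).2 z) [w Dw zw].
by exists (existT _ n w); [exists n => //; exists w | rewrite glue_dist_same].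
Qed.

Lemma exists_metric_gluing :
  exists (W : Type) (dW : W -> W -> R) (e : forall n, Z n -> W),
    [/\ csm dW, forall n, isometric (dZ n) dW (e n) &
        forall n m y, e n (j n y) = e m (j m y)].
Proof.
exists (mquot glue_dist), (mquot_dist glue_dist).
exists (fun n z => mquot_pi glue_dist (existT _ n z)); split.
- apply: mquot_csm; [exact: glue_dist_ge0 | exact: glue_dist_refl |
    exact: glue_dist_pseudometric | exact: glue_complete | exact: glue_separable].
- by move=> n z w; rewrite mquot_dist_pi ?glue_dist_same //;
    [exact: glue_dist_refl | exact: glue_dist_pseudometric].
- move=> n m y; apply: mquot_pi_eq; first exact: glue_dist_pseudometric.
  by rewrite glue_dist_jj -(j_iso 0%N) dZ_refl.
Qed.

End Gluing.

Arguments exists_metric_gluing {R Y dY} y0 dY_complete {Z dZ j}.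

Section Couplings.
Context {R : realType}.

Set Implicit Arguments.

Record coupling (A B : m2m R) := Coupling {
  cpl_space : Type;
  cpl_dist : cpl_space -> cpl_space -> R;
  cpl_left : pts A -> cpl_space;
  cpl_right : pts B -> cpl_space;
  cpl_csm : csm cpl_dist;
  cpl_left_iso : isometric (m2m_r A) cpl_dist cpl_left;
  cpl_right_iso : isometric (m2m_r B) cpl_dist cpl_right }.

Definition coupling_dP {A B} (c : coupling A B) : R :=
  dP (dP (cpl_dist c)) (push2 (m2m_r A) (cpl_dist c) (cpl_left c) (m2m_nu A))
                       (push2 (m2m_r B) (cpl_dist c) (cpl_right c) (m2m_nu B)).

Definition m2m_point (M : m2m R) : pts M := cid (m2m_ne M).

(* [A] and [B] are glued along one point of each. *)
Lemma coupling_inhabited A B : inhabited (coupling A B).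
Proof.
pose Z k := if k is 0 then pts A else pts B.
pose dZ k : Z k -> Z k -> R := match k with 0 => m2m_r A | _.+1 => m2m_r B end.
pose j k : unit -> Z k := match k with 0 => fun=> m2m_point A | _.+1 => fun=> m2m_point B end.
have dZ_csm k : csm (dZ k) by case: k => [|k]; exact: m2m_rP.
have j_iso k : isometric (fun _ _ => 0) (dZ k) (j k).
  by case: k => [|k] [] [] /=; [case: (m2m_rP A) | case: (m2m_rP B)] => -[_ d0 _ _] _ _;
    apply/d0.
have unit_complete : mcomplete (fun _ _ : unit => 0 : R).
  by move=> u _; exists tt => e e0; exists 0%N.
have [W [dW [e [W_csm e_iso _]]]] := exists_metric_gluing tt unit_complete dZ_csm j_iso.
by constructor; exact: (Coupling W_csm (e_iso 0%N) (e_iso 1%N)).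
Qed.

Lemma coupling_dP_approx A B e : 0 < e ->
  exists c : coupling A B, coupling_dP c < d2GP A B + e.
Proof.
move=> e0; rewrite /d2GP; set S := (X in inf X).
have [[Z dZ a b Z_csm a_iso b_iso]] := coupling_inhabited A B.
have inf_S : has_inf S.
  split; first by exists (coupling_dP (Coupling Z_csm a_iso b_iso)), Z, dZ, a, b.
  by exists 0 => _ [? [? [? [? [_ _ _ ->]]]]]; exact: dP_ge0.
have [_ [Z' [dZ' [a' [b' [Z'_csm a'_iso b'_iso ->]]]]] close] := inf_adherent e0 inf_S.
by exists (Coupling Z'_csm a'_iso b'_iso).
Qed.

End Couplings.

Theorem mainTheorem16 (R : realType) (Xs : nat -> m2m R) (X : m2m R) :
  (fun n => d2GP (Xs n) X) @ \oo --> (0 : R) ->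
  exists (Z : Type) (dZ : Z -> Z -> R) (i : pts X -> Z)
         (iN : forall n, pts (Xs n) -> Z),
    [/\ csm dZ, isometric (m2m_r X) dZ i,
        forall n, isometric (m2m_r (Xs n)) dZ (iN n) &
        (fun n => dP (dP dZ) (push2 (m2m_r (Xs n)) dZ (iN n) (m2m_nu (Xs n)))
                             (push2 (m2m_r X) dZ i (m2m_nu X))) @ \oo --> (0 : R)].
Proof.
move=> d2GP_cvg0.
have approx n : exists c : coupling (Xs n) X, coupling_dP c < d2GP (Xs n) X + n.+1%:R^-1.
  by apply: coupling_dP_approx; rewrite invr_gt0.
pose c n := sval (cid (approx n)); have c_lt n := svalP (cid (approx n)).
have [_ X_complete _] := m2m_rP X.
have [W [dW [e [W_csm e_iso e_glue]]]] := exists_metric_gluing (m2m_point X) X_complete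
  (fun n => cpl_csm (c n)) (fun n => cpl_right_iso (c n)).
exists W, dW, (e 0%N \o cpl_right (c 0%N)), (fun n => e n \o cpl_left (c n)).
split=> [||n|]; [exact: W_csm | exact: isometric_comp (cpl_right_iso _) (e_iso _) |
  exact: isometric_comp (cpl_left_iso _) (e_iso _) | ].
apply: (squeeze_cvgr (f := fun=> 0) (h := fun n => d2GP (Xs n) X + n.+1%:R^-1)).
- apply: nearW => n; rewrite dP_ge0 /=.
  have -> : e 0%N \o cpl_right (c 0%N) = e n \o cpl_right (c n).
    by apply: funext => x; exact: e_glue.
  apply: le_trans (ltW (c_lt n)).
  apply: (dP_push2_comp_le _ _ _ _ (isometric_nonexpansive (cpl_left_iso _))
    (isometric_nonexpansive (cpl_right_iso _)) (isometric_nonexpansive (e_iso n)));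
    by apply: csm_pseudometric; do ?[exact: m2m_rP | exact: cpl_csm].
- exact: cvg_cst.
- by rewrite -[0]addr0; apply: cvgD => //; exact: cvg_harmonic.
Qed.
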